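(* Let $X$ be a Hausdorff, locally compact, arc connected space with at least two points, let $\mathcal I$ be an ideal on $X$ and $\alpha$ an infinite cardinal. Then for all $a,b\in X$ the groups $\mathfrak P^\alpha_{\mathcal I}(X,a)$ and $\mathfrak P^\alpha_{\mathcal I}(X,b)$ are isomorphic.
   Context: A space is arc connected if any two distinct points $p,q$ are joined by a continuous injective map $h:[0,1]\to X$ with $h(0)=p$, $h(1)=q$. An ideal on a set $X$ is a nonempty family $\mathcal I$ of subsets of $X$ closed under finite unions and under taking subsets. For a nonzero cardinal $\alpha$ and an ideal $\mathcal I$ on $X$, a continuous map $f:Z\to X$ is an $\alpha\frac{\mathcal I}{}$map if there is $A\in\mathcal I$ such that for every $x\in X\setminus A$ one has $|f^{-1}(x)|\le\alpha$ when $\alpha$ is finite, and $|f^{-1}(x)|<\alpha$ when $\alpha$ is infinite. An $\alpha\frac{\mathcal I}{}$loop with base point $a$ is an $\alpha\frac{\mathcal I}{}$map $f:[0,1]\to X$ with $f(0)=f(1)=a$. $\mathfrak P^\alpha_{\mathcal I}(X,a)$ denotes the subgroup of $\pi_1(X,a)$ generated by the homotopy classes (rel endpoints) of all $\alpha\frac{\mathcal I}{}$loops with base point $a$. *)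

From Stdlib Require Import Reals List.
Open Scope R_scope.

Record TopSpace := {
  carrier :> Type;
  is_open : (carrier -> Prop) -> Prop;
  open_full : is_open (fun _ => True);
  open_empty : is_open (fun _ => False);
  open_inter : forall U V, is_open U -> is_open V -> is_open (fun x => U x /\ V x);
  open_union : forall F : (carrier -> Prop) -> Prop,
      (forall U, F U -> is_open U) -> is_open (fun x => exists U, F U /\ U x)
}.

Definition hausdorff (X : TopSpace) : Prop :=
  forall x y : X, x <> y -> exists U V, is_open X U /\ is_open X V /\ U x /\ V y /\
    forall z, ~ (U z /\ V z).

Definition compact (X : TopSpace) (K : X -> Prop) : Prop :=
  forall C : (X -> Prop) -> Prop,
    (forall U, C U -> is_open X U) ->
    (forall x, K x -> exists U, C U /\ U x) ->
    exists l : list (X -> Prop), (forall U, In U l -> C U) /\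
      (forall x, K x -> exists U, In U l /\ U x).

Definition locally_compact (X : TopSpace) : Prop :=
  forall x : X, exists U K, is_open X U /\ U x /\ (forall y, U y -> K y) /\ compact X K.

(* The unit interval [0,1] as a subspace of R; maps [0,1] -> X are
   represented as functions R -> X whose values outside [0,1] are irrelevant. *)
Definition I01 (t : R) : Prop := 0 <= t <= 1.

Definition cont01 (X : TopSpace) (f : R -> X) : Prop :=
  forall U, is_open X U -> forall t, I01 t -> U (f t) ->
    exists eps, eps > 0 /\ forall s, I01 s -> Rabs (s - t) < eps -> U (f s).

Definition cont01x01 (X : TopSpace) (H : R -> R -> X) : Prop :=
  forall U, is_open X U -> forall s t, I01 s -> I01 t -> U (H s t) ->
    exists eps, eps > 0 /\ forall s' t', I01 s' -> I01 t' ->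
      Rabs (s' - s) < eps -> Rabs (t' - t) < eps -> U (H s' t').

Definition arc_connected (X : TopSpace) : Prop :=
  forall p q : X, p <> q -> exists h : R -> X,
    cont01 X h /\ (forall s t, I01 s -> I01 t -> h s = h t -> s = t) /\
    h 0 = p /\ h 1 = q.

Definition ideal (X : Type) (Id : (X -> Prop) -> Prop) : Prop :=
  (exists A, Id A) /\
  (forall A B, Id A -> Id B -> Id (fun x => A x \/ B x)) /\
  (forall A B, Id A -> (forall x, B x -> A x) -> Id B).

(* A cardinal is represented by a type K (its cardinality |K|). *)
Definition infinite_card (K : Type) : Prop :=
  exists g : nat -> K, forall m n, g m = g n -> m = n.

(* |{t : R | A t}| < |K| *)
Definition card_lt (A : R -> Prop) (K : Type) : Prop :=
  (exists g : R -> K, forall s t, A s -> A t -> g s = g t -> s = t) /\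
  ~ (exists h : K -> R, (forall k, A (h k)) /\ forall k l, h k = h l -> k = l).

Definition alpha_I_map (X : TopSpace) (K : Type) (Id : (X -> Prop) -> Prop)
  (f : R -> X) : Prop :=
  cont01 X f /\ exists A, Id A /\
    forall x : X, ~ A x -> card_lt (fun t => I01 t /\ f t = x) K.

Definition is_loop (X : TopSpace) (a : X) (f : R -> X) : Prop :=
  cont01 X f /\ f 0 = a /\ f 1 = a.

Definition alpha_I_loop (X : TopSpace) (K : Type) (Id : (X -> Prop) -> Prop)
  (a : X) (f : R -> X) : Prop :=
  alpha_I_map X K Id f /\ f 0 = a /\ f 1 = a.

Definition loop_homotopic (X : TopSpace) (a : X) (f g : R -> X) : Prop :=
  is_loop X a f /\ is_loop X a g /\
  exists H : R -> R -> X, cont01x01 X H /\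
    (forall t, I01 t -> H 0 t = f t) /\ (forall t, I01 t -> H 1 t = g t) /\
    (forall s, I01 s -> H s 0 = a /\ H s 1 = a).

Definition const_loop (X : TopSpace) (a : X) : R -> X := fun _ => a.
Definition rev_path (X : TopSpace) (f : R -> X) : R -> X := fun t => f (1 - t).
Definition concat (X : TopSpace) (f g : R -> X) : R -> X :=
  fun t => if Rle_dec t (1/2) then f (2 * t) else g (2 * t - 1).

(* Loops whose homotopy class lies in the subgroup P^alpha_I(X,a) of pi_1(X,a)
   generated by the classes of alpha I-loops at a. *)
Inductive inP (X : TopSpace) (K : Type) (Id : (X -> Prop) -> Prop) (a : X)
  : (R -> X) -> Prop :=
| inP_gen : forall f, alpha_I_loop X K Id a f -> inP X K Id a f
| inP_one : inP X K Id a (const_loop X a)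
| inP_inv : forall f, inP X K Id a f -> inP X K Id a (rev_path X f)
| inP_mul : forall f g, inP X K Id a f -> inP X K Id a g -> inP X K Id a (concat X f g)
| inP_hom : forall f g, inP X K Id a f -> loop_homotopic X a f g -> inP X K Id a g.

(* Group isomorphism P^alpha_I(X,a) ~= P^alpha_I(X,b), with elements given as
   homotopy classes of loops (phi acts on representatives). *)
Definition P_isomorphic (X : TopSpace) (K : Type) (Id : (X -> Prop) -> Prop)
  (a b : X) : Prop :=
  exists phi : (R -> X) -> (R -> X),
    (forall f, inP X K Id a f -> inP X K Id b (phi f)) /\
    (forall f g, inP X K Id a f -> loop_homotopic X a f g ->
        loop_homotopic X b (phi f) (phi g)) /\
    (forall f g, inP X K Id a f -> inP X K Id a g ->
        loop_homotopic X b (phi f) (phi g) -> loop_homotopic X a f g) /\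
    (forall g, inP X K Id b g -> exists f, inP X K Id a f /\
        loop_homotopic X b (phi f) g) /\
    (forall f g, inP X K Id a f -> inP X K Id a g ->
        loop_homotopic X b (phi (concat X f g)) (concat X (phi f) (phi g))).

(* Conjugation by an arc u from a to b, k |-> u^-1 . k . u, is the usual change-of-basepoint
   isomorphism between pi_1(X,a) and pi_1(X,b); it suffices to see that it maps the subgroup
   P at a into the subgroup P at b (the inverse isomorphism is conjugation by the reversed
   arc).  Since u is injective, a point has at most two more preimages under u^-1 . k . u than
   under k, and adding finitely many points to a set of cardinality < alpha keeps it < alpha
   for alpha infinite.  So alpha I-loops at a go to alpha I-loops at b, with the same
   exceptional set A. *)

From Stdlib Require Import Reals Lra Psatz Classical ClassicalEpsilon.
Open Scope R_scope.

Ltac case_Rle := repeat match goal with |- context [Rle_dec ?a ?b] => destruct (Rle_dec a b) end.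

Lemma I01_0 : I01 0. Proof. unfold I01; lra. Qed.
Lemma I01_1 : I01 1. Proof. unfold I01; lra. Qed.

Definition maps_I01 (p : R -> R) := forall t, I01 t -> I01 (p t).

Definition lipschitz01 (L : R) (p : R -> R) :=
  forall s t, I01 s -> I01 t -> Rabs (p s - p t) <= L * Rabs (s - t).

Definition continuous_square (th : R -> R -> R) :=
  forall s t, I01 s -> I01 t -> forall e, e > 0 ->
  exists d, d > 0 /\ forall s' t', I01 s' -> I01 t' ->
    Rabs (s' - s) < d -> Rabs (t' - t) < d -> Rabs (th s' t' - th s t) < e.

Definition maps_square_I01 (th : R -> R -> R) :=
  forall s t, I01 s -> I01 t -> I01 (th s t).

Lemma continuous_square_lipschitz th L : L > 0 ->
  (forall s t s' t', I01 s -> I01 t -> I01 s' -> I01 t' ->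
     Rabs (th s' t' - th s t) <= L * (Rabs (s' - s) + Rabs (t' - t))) ->
  continuous_square th.
Proof.
  intros HL Hth s t Is It e He. exists (e / (2 * L)). split.
  - apply Rdiv_lt_0_compat; lra.
  - intros s' t' Is' It' Hs Ht. eapply Rle_lt_trans; [apply Hth; auto|].
    apply Rlt_le_trans with (L * (e / (2 * L) + e / (2 * L))).
    + apply Rmult_lt_compat_l; lra.
    + right. field. lra.
Qed.

Lemma continuous_square_fst : continuous_square (fun s _ => s).
Proof.
  apply (continuous_square_lipschitz _ 1); [lra|].
  intros. pose proof (Rabs_pos (t' - t)). lra.
Qed.

Lemma continuous_square_snd : continuous_square (fun _ t => t).
Proof.
  apply (continuous_square_lipschitz _ 1); [lra|].
  intros. pose proof (Rabs_pos (s' - s)). lra.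
Qed.

Lemma lipschitz01_ge0 L p : lipschitz01 L p -> 0 <= L.
Proof.
  intros Hp. specialize (Hp 0 1 I01_0 I01_1). pose proof (Rabs_pos (p 0 - p 1)).
  rewrite Rminus_0_l, Rabs_Ropp, Rabs_R1 in Hp. lra.
Qed.

Lemma continuous_square_comp_snd L p : lipschitz01 L p ->
  continuous_square (fun _ t => p t).
Proof.
  intros Hp. pose proof (lipschitz01_ge0 L p Hp).
  apply (continuous_square_lipschitz _ (L + 1)); [lra|].
  intros s t s' t' Is It Is' It'. specialize (Hp t' t It' It).
  pose proof (Rabs_pos (s' - s)). pose proof (Rabs_pos (t' - t)). nra.
Qed.

Lemma continuous_square_convex L p q : lipschitz01 L p -> lipschitz01 L q ->
  maps_I01 p -> maps_I01 q -> continuous_square (fun s t => (1 - s) * p t + s * q t).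
Proof.
  intros Lp Lq ip iq. pose proof (lipschitz01_ge0 L p Lp).
  apply (continuous_square_lipschitz _ (3 * L + 1)); [lra|].
  intros s t s' t' Is It Is' It'.
  pose proof (Lp t' t It' It) as Hp. pose proof (Lq t' t It' It) as Hq.
  replace (((1 - s') * p t' + s' * q t') - ((1 - s) * p t + s * q t))
    with ((p t' - p t) + s' * ((q t' - q t) + - (p t' - p t)) + (s' - s) * (q t - p t)) by ring.
  assert (Hs' : Rabs s' <= 1) by (unfold I01 in *; rewrite Rabs_right; lra).
  assert (Hd : Rabs (q t - p t) <= 1).
  { specialize (ip t It). specialize (iq t It). unfold I01 in *. apply Rabs_le; lra. }
  assert (HB := Rabs_triang (q t' - q t) (- (p t' - p t))). rewrite Rabs_Ropp in HB.
  eapply Rle_trans; [apply Rabs_triang|].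
  eapply Rle_trans; [apply Rplus_le_compat_r; apply Rabs_triang|].
  rewrite !Rabs_mult.
  pose proof (Rabs_pos ((q t' - q t) + - (p t' - p t))).
  pose proof (Rabs_pos (s' - s)). pose proof (Rabs_pos (t' - t)). pose proof (Rabs_pos s').
  nra.
Qed.

Section Paths.

Variable X : TopSpace.

Lemma cont01x01_comp (H : R -> R -> X) th1 th2 :
  cont01x01 X H -> continuous_square th1 -> continuous_square th2 ->
  maps_square_I01 th1 -> maps_square_I01 th2 ->
  cont01x01 X (fun s t => H (th1 s t) (th2 s t)).
Proof.
  intros HH c1 c2 i1 i2 U HU s t Is It HUst.
  destruct (HH U HU _ _ (i1 s t Is It) (i2 s t Is It) HUst) as [e [He Hc]].
  destruct (c1 s t Is It e He) as [d1 [Hd1 P1]].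
  destruct (c2 s t Is It e He) as [d2 [Hd2 P2]].
  exists (Rmin d1 d2); split; [apply Rmin_pos; lra|].
  intros s' t' Is' It' Hs Ht. apply Hc; auto.
  - apply P1; auto; eapply Rlt_le_trans; eauto; apply Rmin_l.
  - apply P2; auto; eapply Rlt_le_trans; eauto; apply Rmin_r.
Qed.

Lemma cont01x01_swap (H : R -> R -> X) :
  cont01x01 X H -> cont01x01 X (fun s t => H t s).
Proof.
  intros HH U HU s t Is It Hu. destruct (HH U HU t s It Is Hu) as [e [He Hc]].
  exists e; split; auto.
Qed.

Lemma cont01x01_cont01 (f : R -> X) : cont01 X f -> cont01x01 X (fun _ t => f t).
Proof.
  intros Hf U HU s t Is It Hu. destruct (Hf U HU t It Hu) as [e [He Hc]].
  exists e; split; auto.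
Qed.

Lemma cont01x01_section (H : R -> R -> X) s0 :
  cont01x01 X H -> I01 s0 -> cont01 X (fun t => H s0 t).
Proof.
  intros HH Is U HU t It Hu. destruct (HH U HU s0 t Is It Hu) as [e [He Hc]].
  exists e; split; auto. intros s Is' Hs. apply Hc; auto.
  rewrite Rminus_diag, Rabs_R0; lra.
Qed.

Lemma cont01x01_paste (F G : R -> R -> X) :
  cont01x01 X F -> cont01x01 X G -> (forall s, I01 s -> F s 1 = G s 0) ->
  cont01x01 X (fun s t => if Rle_dec t (1/2) then F s (2*t) else G s (2*t-1)).
Proof.
  intros HF HG HFG U HU s t Is It. unfold I01 in *.
  destruct (total_order_T t (1/2)) as [[Hlt|Heq]|Hgt].
  - destruct (Rle_dec t (1/2)) as [_|n]; [|lra]. intro Hu.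
    destruct (HF U HU s (2*t) Is ltac:(unfold I01; lra) Hu) as [e [He Hc]].
    exists (Rmin (e/2) (1/2 - t)). split; [apply Rmin_pos; lra|].
    intros s' t' Is' It' Hs Ht.
    pose proof (Rmin_l (e/2) (1/2 - t)). pose proof (Rmin_r (e/2) (1/2 - t)).
    destruct (Rle_dec t' (1/2)) as [Hl|n].
    + apply Hc; unfold I01 in *; try lra.
      replace (2*t' - 2*t) with (2 * (t' - t)) by ring.
      rewrite Rabs_mult, Rabs_right by lra. lra.
    + exfalso. apply n. apply Rabs_def2 in Ht. lra.
  - subst t. destruct (Rle_dec (1/2) (1/2)) as [_|n]; [|lra].
    replace (2 * (1/2)) with 1 by field. intro Hu.
    destruct (HF U HU s 1 Is ltac:(unfold I01; lra) Hu) as [e1 [He1 Hc1]].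
    rewrite (HFG s Is) in Hu.
    destruct (HG U HU s 0 Is ltac:(unfold I01; lra) Hu) as [e2 [He2 Hc2]].
    assert (0 < Rmin e1 e2) by (apply Rmin_pos; lra).
    exists (Rmin e1 e2 / 2). split; [lra|].
    intros s' t' Is' It' Hs Ht.
    pose proof (Rmin_l e1 e2). pose proof (Rmin_r e1 e2).
    apply Rabs_def2 in Ht.
    destruct (Rle_dec t' (1/2)) as [Hl|n].
    + apply Hc1; unfold I01 in *; try lra. rewrite Rabs_left1 by lra. lra.
    + apply Hc2; unfold I01 in *; try lra. rewrite Rabs_right by lra. lra.
  - destruct (Rle_dec t (1/2)) as [n|_]; [lra|]. intro Hu.
    destruct (HG U HU s (2*t-1) Is ltac:(unfold I01; lra) Hu) as [e [He Hc]].
    exists (Rmin (e/2) (t - 1/2)). split; [apply Rmin_pos; lra|].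
    intros s' t' Is' It' Hs Ht.
    pose proof (Rmin_l (e/2) (t - 1/2)). pose proof (Rmin_r (e/2) (t - 1/2)).
    destruct (Rle_dec t' (1/2)) as [n|Hl].
    + exfalso. apply Rabs_def2 in Ht. lra.
    + apply Hc; unfold I01 in *; try lra.
      replace (2*t' - 1 - (2*t - 1)) with (2 * (t' - t)) by ring.
      rewrite Rabs_mult, Rabs_right by lra. lra.
Qed.

Lemma cont01_ext (f g : R -> X) :
  cont01 X f -> (forall t, I01 t -> f t = g t) -> cont01 X g.
Proof.
  intros Hf E U HU t It Hu. rewrite <- E in Hu by auto.
  destruct (Hf U HU t It Hu) as [e [He Hc]]. exists e; split; auto.
  intros s Is Hs. rewrite <- E by auto. auto.
Qed.

Lemma cont01_comp_lipschitz (f : R -> X) L p :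
  cont01 X f -> lipschitz01 L p -> maps_I01 p -> cont01 X (fun t => f (p t)).
Proof.
  intros cf lp ip.
  refine (cont01x01_section (fun s t => f (p t)) 0 _ I01_0).
  apply (cont01x01_comp (fun _ r => f r) (fun s _ => s) (fun _ t => p t)
           (cont01x01_cont01 f cf) continuous_square_fst
           (continuous_square_comp_snd L p lp)); intros s t Is It; auto.
Qed.

Definition is_path (f : R -> X) (x y : X) := cont01 X f /\ f 0 = x /\ f 1 = y.

Definition path_homotopic (x y : X) (f g : R -> X) :=
  is_path f x y /\ is_path g x y /\ exists H : R -> R -> X, cont01x01 X H /\
    (forall t, I01 t -> H 0 t = f t) /\ (forall t, I01 t -> H 1 t = g t) /\
    (forall s, I01 s -> H s 0 = x /\ H s 1 = y).

Lemma loop_homotopicE a f g : loop_homotopic X a f g <-> path_homotopic a a f g.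
Proof. unfold loop_homotopic, path_homotopic, is_path, is_loop. tauto. Qed.

Lemma is_path_const x : is_path (const_loop X x) x x.
Proof. split; [|split; reflexivity]. intros U HU t It Hu. exists 1. split; [lra|]. auto. Qed.

Lemma is_path_rev f x y : is_path f x y -> is_path (rev_path X f) y x.
Proof.
  intros [c [h0 h1]]. unfold rev_path. split; [|split].
  - apply (cont01_comp_lipschitz f 1 (fun t => 1 - t)); auto.
    + intros s t _ _. replace (1 - s - (1 - t)) with (- (s - t)) by ring.
      rewrite Rabs_Ropp. lra.
    + intros t It; unfold I01 in *; lra.
  - replace (1 - 0) with 1 by ring. auto.
  - replace (1 - 1) with 0 by ring. auto.
Qed.

Lemma concat_0 f g : concat X f g 0 = f 0.
Proof. unfold concat. case_Rle; [|lra]. f_equal; ring. Qed.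

Lemma concat_1 f g : concat X f g 1 = g 1.
Proof. unfold concat. case_Rle; [lra|]. f_equal; ring. Qed.

Lemma is_path_concat f g x y z :
  is_path f x y -> is_path g y z -> is_path (concat X f g) x z.
Proof.
  intros [cf [f0 f1]] [cg [g0 g1]]. split; [|rewrite concat_0, concat_1; auto].
  apply (cont01x01_section _ 0 (cont01x01_paste (fun _ t => f t) (fun _ t => g t)
    (cont01x01_cont01 f cf) (cont01x01_cont01 g cg) ltac:(intros; congruence)) I01_0).
Qed.

#[local] Hint Resolve is_path_const is_path_rev is_path_concat : paths.

Lemma rev_pathK u t : rev_path X (rev_path X u) t = u t.
Proof. unfold rev_path. f_equal; ring. Qed.

Lemma is_path_ext f g x y :
  is_path f x y -> (forall t, I01 t -> f t = g t) -> is_path g x y.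
Proof.
  intros [c [h0 h1]] E. split; [eapply cont01_ext; eauto|].
  rewrite <- (E 0 I01_0), <- (E 1 I01_1). auto.
Qed.

Lemma path_homotopic_ext x y f g f' g' : path_homotopic x y f g ->
  (forall t, I01 t -> f t = f' t) -> (forall t, I01 t -> g t = g' t) ->
  path_homotopic x y f' g'.
Proof.
  intros [pf [pg [H [c [h0 [h1 h2]]]]]] E1 E2.
  split; [exact (is_path_ext f f' x y pf E1)|].
  split; [exact (is_path_ext g g' x y pg E2)|].
  exists H. split; [|split; [|split]]; auto.
  - intros t It; rewrite <- E1; auto.
  - intros t It; rewrite <- E2; auto.
Qed.

Lemma path_homotopic_path_r x y f g : path_homotopic x y f g -> is_path g x y.
Proof. intros [_ [p _]]; auto. Qed.

Lemma path_homotopic_refl f x y : is_path f x y -> path_homotopic x y f f.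
Proof.
  intros P. split; auto. split; auto. destruct P as [c [h0 h1]].
  exists (fun _ t => f t). repeat split; auto. apply cont01x01_cont01; auto.
Qed.

Lemma path_homotopic_sym f g x y : path_homotopic x y f g -> path_homotopic x y g f.
Proof.
  intros [pf [pg [H [c [h0 [h1 h2]]]]]]. split; auto. split; auto.
  exists (fun s t => H (1 - s) t). split; [|split; [|split]].
  - apply (cont01x01_comp H (fun s _ => 1 - s) (fun _ t => t)); auto.
    + apply (continuous_square_lipschitz _ 1); [lra|]. intros.
      pose proof (Rabs_pos (t' - t)).
      replace (1 - s' - (1 - s)) with (- (s' - s)) by ring. rewrite Rabs_Ropp. lra.
    + apply continuous_square_snd.
    + intros s t Is It; unfold I01 in *; lra.
    + intros s t Is It; auto.
  - intros t It. replace (1 - 0) with 1 by ring. auto.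
  - intros t It. replace (1 - 1) with 0 by ring. auto.
  - intros s Is. apply h2. unfold I01 in *; lra.
Qed.

Lemma path_homotopic_trans f g k x y :
  path_homotopic x y f g -> path_homotopic x y g k -> path_homotopic x y f k.
Proof.
  intros [pf [pg [H1 [c1 [a0 [a1 a2]]]]]] [_ [pk [H2 [c2 [b0 [b1 b2]]]]]].
  split; auto. split; auto.
  exists (fun s t => if Rle_dec s (1/2) then H1 (2*s) t else H2 (2*s-1) t).
  split; [|split; [|split]].
  - apply (cont01x01_swap (fun t s => if Rle_dec s (1/2) then H1 (2*s) t else H2 (2*s-1) t)).
    apply (cont01x01_paste (fun t s => H1 s t) (fun t s => H2 s t));
      [apply cont01x01_swap; auto | apply cont01x01_swap; auto |].
    intros t It. rewrite a1, b0; auto.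
  - intros t It. case_Rle; [|lra]. replace (2*0) with 0 by ring. auto.
  - intros t It. case_Rle; [lra|]. replace (2*1-1) with 1 by ring. auto.
  - intros s Is. case_Rle; [apply a2 | apply b2]; unfold I01 in *; lra.
Qed.

Lemma path_homotopic_concat f f' g g' x y z :
  path_homotopic x y f f' -> path_homotopic y z g g' ->
  path_homotopic x z (concat X f g) (concat X f' g').
Proof.
  intros [pf [pf' [H1 [c1 [a0 [a1 a2]]]]]] [pg [pg' [H2 [c2 [b0 [b1 b2]]]]]].
  split; [eapply is_path_concat; eauto|]. split; [eapply is_path_concat; eauto|].
  exists (fun s t => if Rle_dec t (1/2) then H1 s (2*t) else H2 s (2*t-1)).
  split; [|split; [|split]].
  - apply cont01x01_paste; auto. intros s Is. destruct (a2 s Is), (b2 s Is). congruence.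
  - intros t It. unfold concat. case_Rle; [apply a0 | apply b0]; unfold I01 in *; lra.
  - intros t It. unfold concat. case_Rle; [apply a1 | apply b1]; unfold I01 in *; lra.
  - intros s Is. split.
    + case_Rle; [|lra]. replace (2*0) with 0 by ring. apply a2; auto.
    + case_Rle; [lra|]. replace (2*1-1) with 1 by ring. apply b2; auto.
Qed.

Lemma path_homotopic_reparam (f : R -> X) L p q :
  cont01 X f -> lipschitz01 L p -> lipschitz01 L q -> maps_I01 p -> maps_I01 q ->
  p 0 = q 0 -> p 1 = q 1 ->
  path_homotopic (f (p 0)) (f (p 1)) (fun t => f (p t)) (fun t => f (q t)).
Proof.
  intros cf lp lq ip iq e0 e1.
  set (th := fun s t => (1 - s) * p t + s * q t).
  assert (ith : maps_square_I01 th).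
  { intros s t Is It. unfold th. specialize (ip t It). specialize (iq t It).
    unfold I01 in *. nra. }
  split; [|split].
  - split; [eapply cont01_comp_lipschitz; eauto|]. auto.
  - split; [eapply cont01_comp_lipschitz; eauto|]. rewrite e0, e1. auto.
  - exists (fun s t => f (th s t)). split; [|split; [|split]].
    + apply (cont01x01_comp (fun _ r => f r) (fun s _ => s) th (cont01x01_cont01 f cf)
        continuous_square_fst (continuous_square_convex L p q lp lq ip iq)
        (fun s t Is _ => Is) ith).
    + intros t It. unfold th. f_equal; ring.
    + intros t It. unfold th. f_equal; ring.
    + intros s Is. unfold th. rewrite <- e0, <- e1. split; f_equal; ring.
Qed.

Definition assoc_reparam t :=
  if Rle_dec t (1/4) then 2*t else if Rle_dec t (1/2) then t + 1/4 else (t+1)/2.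
Definition concat1p_reparam t := if Rle_dec t (1/2) then 0 else 2*t-1.
Definition concatp1_reparam t := if Rle_dec t (1/2) then 2*t else 1.
Definition fold_reparam t := 1 - Rabs (1 - 2*t).

Lemma lipschitz01_id : lipschitz01 2 (fun t => t).
Proof. intros s t _ _. pose proof (Rabs_pos (s - t)). lra. Qed.

Lemma lipschitz01_0 : lipschitz01 2 (fun _ => 0).
Proof. intros s t _ _. pose proof (Rabs_pos (s - t)). rewrite Rminus_diag, Rabs_R0. lra. Qed.

Lemma maps_I01_id : maps_I01 (fun t => t).
Proof. intros t It; auto. Qed.

Lemma maps_I01_0 : maps_I01 (fun _ => 0).
Proof. intros t It; exact I01_0. Qed.

Lemma lipschitz01_assoc_reparam : lipschitz01 2 assoc_reparam.
Proof. intros s t Is It. unfold assoc_reparam, I01 in *. case_Rle; split_Rabs; lra. Qed.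

Lemma maps_I01_assoc_reparam : maps_I01 assoc_reparam.
Proof. intros t It. unfold assoc_reparam, I01 in *. case_Rle; lra. Qed.

Lemma lipschitz01_concat1p_reparam : lipschitz01 2 concat1p_reparam.
Proof. intros s t Is It. unfold concat1p_reparam, I01 in *. case_Rle; split_Rabs; lra. Qed.

Lemma maps_I01_concat1p_reparam : maps_I01 concat1p_reparam.
Proof. intros t It. unfold concat1p_reparam, I01 in *. case_Rle; lra. Qed.

Lemma lipschitz01_concatp1_reparam : lipschitz01 2 concatp1_reparam.
Proof. intros s t Is It. unfold concatp1_reparam, I01 in *. case_Rle; split_Rabs; lra. Qed.

Lemma maps_I01_concatp1_reparam : maps_I01 concatp1_reparam.
Proof. intros t It. unfold concatp1_reparam, I01 in *. case_Rle; lra. Qed.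

Lemma lipschitz01_fold_reparam : lipschitz01 2 fold_reparam.
Proof. intros s t Is It. unfold fold_reparam, I01 in *. split_Rabs; lra. Qed.

Lemma maps_I01_fold_reparam : maps_I01 fold_reparam.
Proof. intros t It. unfold fold_reparam, I01 in *. split_Rabs; lra. Qed.

Lemma path_homotopic_reparam_id f g p x y :
  is_path f x y -> lipschitz01 2 p -> maps_I01 p -> p 0 = 0 -> p 1 = 1 ->
  (forall t, I01 t -> f (p t) = g t) -> path_homotopic x y g f.
Proof.
  intros [cf [f0 f1]] lp ip p0 p1 E.
  assert (P := path_homotopic_reparam f 2 p (fun t => t) cf lp lipschitz01_id ip maps_I01_id
                 p0 p1).
  rewrite p0, p1, f0, f1 in P.
  eapply path_homotopic_ext; [exact P | exact E | reflexivity].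
Qed.

Lemma concatA_homotopic f g k x y z w :
  is_path f x y -> is_path g y z -> is_path k z w ->
  path_homotopic x w (concat X (concat X f g) k) (concat X f (concat X g k)).
Proof.
  intros pf pg pk.
  apply (path_homotopic_reparam_id _ _ assoc_reparam).
  - eauto with paths.
  - exact lipschitz01_assoc_reparam.
  - exact maps_I01_assoc_reparam.
  - unfold assoc_reparam; case_Rle; lra.
  - unfold assoc_reparam; case_Rle; lra.
  - intros t It. unfold assoc_reparam, concat. case_Rle; try (exfalso; lra); f_equal; lra.
Qed.

Lemma concat1p_homotopic f x y : is_path f x y ->
  path_homotopic x y (concat X (const_loop X x) f) f.
Proof.
  intros pf. apply (path_homotopic_reparam_id _ _ concat1p_reparam).
  - exact pf.
  - exact lipschitz01_concat1p_reparam.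
  - exact maps_I01_concat1p_reparam.
  - unfold concat1p_reparam; case_Rle; lra.
  - unfold concat1p_reparam; case_Rle; lra.
  - destruct pf as [_ [f0 _]]. intros t It. unfold concat1p_reparam, concat, const_loop.
    case_Rle; try (exfalso; lra); auto; f_equal; lra.
Qed.

Lemma concatp1_homotopic f x y : is_path f x y ->
  path_homotopic x y (concat X f (const_loop X y)) f.
Proof.
  intros pf. apply (path_homotopic_reparam_id _ _ concatp1_reparam).
  - exact pf.
  - exact lipschitz01_concatp1_reparam.
  - exact maps_I01_concatp1_reparam.
  - unfold concatp1_reparam; case_Rle; lra.
  - unfold concatp1_reparam; case_Rle; lra.
  - destruct pf as [_ [_ f1]]. intros t It. unfold concatp1_reparam, concat, const_loop.
    case_Rle; try (exfalso; lra); auto; f_equal; lra.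
Qed.

Lemma concatpV_homotopic f x y : is_path f x y ->
  path_homotopic x x (concat X f (rev_path X f)) (const_loop X x).
Proof.
  intros [cf [f0 f1]].
  assert (P := path_homotopic_reparam _ _ fold_reparam (fun _ => 0) cf
    lipschitz01_fold_reparam lipschitz01_0 maps_I01_fold_reparam maps_I01_0
    ltac:(unfold fold_reparam; split_Rabs; lra) ltac:(unfold fold_reparam; split_Rabs; lra)).
  replace (fold_reparam 0) with 0 in P by (unfold fold_reparam; split_Rabs; lra).
  replace (fold_reparam 1) with 0 in P by (unfold fold_reparam; split_Rabs; lra).
  rewrite f0 in P.
  eapply path_homotopic_ext; [exact P| |]; intros t It; unfold const_loop; [|auto].
  unfold fold_reparam, concat, rev_path. unfold I01 in It. case_Rle; f_equal; split_Rabs; lra.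
Qed.

Lemma concatVp_homotopic f x y : is_path f x y ->
  path_homotopic y y (concat X (rev_path X f) f) (const_loop X y).
Proof.
  intros pf.
  apply path_homotopic_ext with (concat X (rev_path X f) (rev_path X (rev_path X f)))
    (const_loop X y); [apply concatpV_homotopic with x; auto with paths | |reflexivity].
  intros t _; unfold concat; case_Rle; [|rewrite rev_pathK]; reflexivity.
Qed.

Lemma concat_inverse_unique f g x y : is_path f x y -> is_path g y x ->
  path_homotopic x x (concat X f g) (const_loop X x) -> path_homotopic x y f (rev_path X g).
Proof.
  intros pf pg H.
  eapply path_homotopic_trans; [apply path_homotopic_sym, concatp1_homotopic; eauto|].
  eapply path_homotopic_trans.
  { apply path_homotopic_concat with y; [apply path_homotopic_refl; eauto|].
    apply path_homotopic_sym, concatpV_homotopic with x; eauto. }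
  eapply path_homotopic_trans.
  { apply path_homotopic_sym, concatA_homotopic with y x; eauto with paths. }
  eapply path_homotopic_trans.
  { apply path_homotopic_concat with x; [eauto|apply path_homotopic_refl; eauto with paths]. }
  apply concat1p_homotopic; eauto with paths.
Qed.

Definition conj_path (u k : R -> X) := concat X (rev_path X u) (concat X k u).

Lemma is_path_conj u k a b : is_path u a b -> is_path k a a -> is_path (conj_path u k) b b.
Proof. intros. unfold conj_path. eauto with paths. Qed.

Lemma conj_path_homotopic u k k' a b : is_path u a b -> path_homotopic a a k k' ->
  path_homotopic b b (conj_path u k) (conj_path u k').
Proof.
  intros pu H. unfold conj_path.
  apply path_homotopic_concat with a; [apply path_homotopic_refl; auto with paths|].
  apply path_homotopic_concat with a; auto. apply path_homotopic_refl; auto.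
Qed.

Lemma conj_path_concat u f g a b : is_path u a b -> is_path f a a -> is_path g a a ->
  path_homotopic b b (conj_path u (concat X f g)) (concat X (conj_path u f) (conj_path u g)).
Proof.
  intros pu pf pg. unfold conj_path.
  assert (pu' := is_path_rev u a b pu).
  eapply path_homotopic_trans.
  { apply path_homotopic_concat with a; [apply path_homotopic_refl; eauto|].
    apply concatA_homotopic with a a; eauto. }
  eapply path_homotopic_trans.
  { apply path_homotopic_concat with a; [apply path_homotopic_refl; eauto|].
    apply path_homotopic_concat with a; [apply path_homotopic_refl; eauto|].
    apply path_homotopic_sym. eapply path_homotopic_trans.
    { apply path_homotopic_concat with a; [apply concatpV_homotopic with b; eauto|].
      apply (path_homotopic_refl (concat X g u)); eauto with paths. }
    apply concat1p_homotopic; eauto with paths. }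
  eapply path_homotopic_trans.
  { apply path_homotopic_concat with a; [apply path_homotopic_refl; eauto|].
    apply path_homotopic_concat with a; [apply path_homotopic_refl; eauto|].
    apply concatA_homotopic with b a; eauto with paths. }
  eapply path_homotopic_trans.
  { apply path_homotopic_concat with a; [apply path_homotopic_refl; eauto|].
    apply path_homotopic_sym, concatA_homotopic with a b; eauto with paths. }
  apply path_homotopic_sym, concatA_homotopic with a b; eauto with paths.
Qed.

Lemma conj_path_const u a b : is_path u a b ->
  path_homotopic b b (conj_path u (const_loop X a)) (const_loop X b).
Proof.
  intros pu. unfold conj_path. eapply path_homotopic_trans.
  { apply path_homotopic_concat with a; [apply path_homotopic_refl; auto with paths|].
    apply concat1p_homotopic; auto. }
  apply concatVp_homotopic with a; auto.
Qed.

Lemma conj_path_rev u f a b : is_path u a b -> is_path f a a ->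
  path_homotopic b b (conj_path u (rev_path X f)) (rev_path X (conj_path u f)).
Proof.
  intros pu pf.
  apply concat_inverse_unique; try apply is_path_conj with a; auto with paths.
  eapply path_homotopic_trans.
  { apply path_homotopic_sym, (conj_path_concat u (rev_path X f) f a b); auto with paths. }
  eapply path_homotopic_trans.
  { apply conj_path_homotopic with a; [auto | apply concatVp_homotopic with a; auto]. }
  apply conj_path_const; auto.
Qed.

Lemma conj_path_revK u k a b : is_path u a b -> is_path k a a ->
  path_homotopic a a (conj_path (rev_path X u) (conj_path u k)) k.
Proof.
  intros pu pk. assert (pu' := is_path_rev u a b pu).
  apply path_homotopic_ext with (concat X u (concat X (conj_path u k) (rev_path X u))) k;
    [| intros t _; unfold conj_path, concat; destruct (Rle_dec t (1/2));
       [rewrite rev_pathK|]; reflexivity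
     | reflexivity].
  unfold conj_path.
  eapply path_homotopic_trans.
  { apply path_homotopic_concat with b; [apply path_homotopic_refl; eauto|].
    apply concatA_homotopic with a b; eauto with paths. }
  eapply path_homotopic_trans.
  { apply path_homotopic_sym, concatA_homotopic with b a; eauto with paths. }
  eapply path_homotopic_trans.
  { apply path_homotopic_concat with a; [apply concatpV_homotopic with b; eauto|].
    apply path_homotopic_refl; eauto with paths. }
  eapply path_homotopic_trans; [apply concat1p_homotopic; eauto with paths|].
  eapply path_homotopic_trans; [apply concatA_homotopic with a b; eauto with paths|].
  eapply path_homotopic_trans.
  { apply path_homotopic_concat with a; [apply path_homotopic_refl; eauto|].
    apply concatpV_homotopic with b; eauto. }
  apply concatp1_homotopic; auto.
Qed.

End Paths.

Definition swap {K : Type} (a b j : K) : K :=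
  if excluded_middle_informative (j = a) then b
  else if excluded_middle_informative (j = b) then a else j.

Lemma swapK {K : Type} (a b j : K) : swap a b (swap a b j) = j.
Proof.
  unfold swap.
  repeat (destruct excluded_middle_informative; subst; try congruence).
Qed.

Section InfiniteCardinal.

Variables (K : Type) (g : nat -> K).
Hypothesis g_inj : forall m n, g m = g n -> m = n.

(* Hilbert's hotel along the injective sequence g. *)
Definition hotel_shift (k : K) : K :=
  match excluded_middle_informative (exists n, g n = k) with
  | left Hk => g (S (proj1_sig (constructive_indefinite_description _ Hk)))
  | right _ => k
  end.

Lemma hotel_shift_inj k l : hotel_shift k = hotel_shift l -> k = l.
Proof.
  unfold hotel_shift.
  destruct excluded_middle_informative as [Hk|Nk];
  destruct excluded_middle_informative as [Hl|Nl]; intro E.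
  - destruct constructive_indefinite_description as [m <-].
    destruct constructive_indefinite_description as [n <-].
    apply g_inj in E. injection E as ->. reflexivity.
  - exfalso; apply Nl; eauto.
  - exfalso; apply Nk; eauto.
  - exact E.
Qed.

Lemma hotel_shift_neq k : hotel_shift k <> g 0%nat.
Proof.
  unfold hotel_shift. destruct excluded_middle_informative as [Hk|Nk]; intro E.
  - apply g_inj in E. discriminate.
  - apply Nk; eauto.
Qed.

End InfiniteCardinal.

Lemma infinite_card_avoid (K : Type) : infinite_card K -> forall k0 : K,
  exists tau : K -> K, (forall k l, tau k = tau l -> k = l) /\ forall k, tau k <> k0.
Proof.
  intros [g gi] k0. exists (fun k => swap k0 (g 0%nat) (hotel_shift K g k)). split.
  - intros k l E. apply (hotel_shift_inj K g gi).
    rewrite <- (swapK k0 (g 0%nat) (hotel_shift K g k)), E. apply swapK.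
  - intros k E. apply (hotel_shift_neq K g gi k).
    rewrite <- (swapK k0 (g 0%nat) (hotel_shift K g k)), E.
    unfold swap. destruct excluded_middle_informative; congruence.
Qed.

Lemma card_lt_inj (K : Type) (S T : R -> Prop) (phi : R -> R) : card_lt T K ->
  (forall t, S t -> T (phi t)) -> (forall s t, S s -> S t -> phi s = phi t -> s = t) ->
  card_lt S K.
Proof.
  intros [[g gi] N] HT Hi. split.
  - exists (fun t => g (phi t)). intros s t Ss St E. apply Hi; auto.
  - intros [h [hS hi]]. apply N. exists (fun k => phi (h k)). split; [auto|].
    intros k l E. apply hi. apply Hi; auto.
Qed.

Lemma card_lt_add_point (K : Type) (S T : R -> Prop) (p : R) :
  infinite_card K -> card_lt T K -> (forall t, S t -> T t \/ t = p) -> card_lt S K.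
Proof.
  intros inf [[g gi] N] HS. split.
  - pose proof inf as [g0 _].
    destruct (infinite_card_avoid K inf (g0 0%nat)) as [tau [ti ta]].
    exists (fun t => if Req_EM_T t p then g0 0%nat else tau (g t)).
    intros s t Ss St. destruct (Req_EM_T s p), (Req_EM_T t p); intro E.
    + congruence.
    + exfalso; apply (ta (g t)); auto.
    + exfalso; apply (ta (g s)); auto.
    + apply ti, gi in E; auto.
      * destruct (HS s Ss); [auto | congruence].
      * destruct (HS t St); [auto | congruence].
  - intros [h [hS hi]]. apply N.
    destruct (classic (exists k0, h k0 = p)) as [[k0 Hk0]|Nk].
    + destruct (infinite_card_avoid K inf k0) as [tau [ti ta]].
      exists (fun k => h (tau k)). split.
      * intros k. destruct (HS _ (hS (tau k))) as [Ht|Ep]; auto.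
        exfalso. apply (ta k), hi. congruence.
      * intros k l E. apply ti, hi, E.
    + exists h. split; auto. intros k. destruct (HS _ (hS k)) as [Ht|Ep]; auto.
      exfalso; apply Nk; eauto.
Qed.

Definition subsingleton (P : R -> Prop) := forall s t, P s -> P t -> s = t.

Lemma card_lt_add_subsingleton (K : Type) (S T P : R -> Prop) :
  infinite_card K -> card_lt T K -> subsingleton P ->
  (forall t, S t -> T t \/ P t) -> card_lt S K.
Proof.
  intros inf HT HP HS. destruct (classic (exists p, P p)) as [[p Pp]|NP].
  - apply (card_lt_add_point K S T p inf HT).
    intros t St. destruct (HS t St); [left | right; apply HP]; auto.
  - apply (card_lt_inj K S T (fun t => t) HT); auto.
    intros t St. destruct (HS t St) as [|Pt]; [auto | exfalso; eauto].
Qed.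

Definition is_arc (X : TopSpace) (u : R -> X) (a b : X) :=
  is_path X u a b /\ forall s t, I01 s -> I01 t -> u s = u t -> s = t.

Lemma is_arc_rev (X : TopSpace) u a b : is_arc X u a b -> is_arc X (rev_path X u) b a.
Proof.
  intros [pu ui]. split; [apply is_path_rev; auto|].
  intros s t Is It E. apply ui in E; unfold I01 in *; lra.
Qed.

Lemma arc_fiber_subsingleton (X : TopSpace) u a b (P : R -> Prop) (e : R -> R) x :
  is_arc X u a b -> (forall t, P t -> I01 (e t)) -> (forall s t, e s = e t -> s = t) ->
  subsingleton (fun t => P t /\ u (e t) = x).
Proof.
  intros [_ ui] Pe ei s t [Ps Es] [Pt Et]. apply ei, ui; auto. congruence.
Qed.

(* On [1/2, 3/4] the loop u^-1 . f . u runs through f; on [0, 1/2] and [3/4, 1] it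
   traverses the injective arc u, so each point has at most one preimage there. *)
Lemma alpha_I_loop_conj_path (X : TopSpace) (K : Type) (Id : (X -> Prop) -> Prop) u a b f :
  infinite_card K -> is_arc X u a b -> alpha_I_loop X K Id a f ->
  alpha_I_loop X K Id b (conj_path X u f).
Proof.
  intros inf au [[cf [A [IA HA]]] [f0 f1]].
  destruct (is_path_conj X u f a b (proj1 au) (conj cf (conj f0 f1))) as [cc [c0 c1]].
  split; [|split; auto]. split; auto. exists A. split; auto.
  intros x nA.
  assert (Hmid : card_lt (fun t => 1/2 < t /\ 2*t-1 <= 1/2 /\ I01 (2*(2*t-1)) /\
                                   f (2*(2*t-1)) = x) K).
  { apply (card_lt_inj K _ _ (fun t => 2*(2*t-1)) (HA x nA)).
    - intros t [_ [_ [H1 H2]]]; split; auto.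
    - intros s t _ _ E; lra. }
  apply (card_lt_add_subsingleton K _ _ _ inf
    (card_lt_add_subsingleton K _ _ _ inf Hmid
       (arc_fiber_subsingleton X u a b (fun t => I01 t /\ 1/2 < t /\ 1/2 < 2*t-1)
          (fun t => 2*(2*t-1)-1) x au ltac:(intros t Ht; unfold I01 in *; lra)
          ltac:(intros s t E; lra)) (fun t Ht => Ht))
    (arc_fiber_subsingleton X (rev_path X u) b a (fun t => I01 t /\ t <= 1/2)
       (fun t => 2*t) x (is_arc_rev X u a b au) ltac:(intros t Ht; unfold I01 in *; lra)
       ltac:(intros s t E; lra))).
  intros t [It Et]. unfold conj_path, concat in Et.
  destruct (Rle_dec t (1/2)) as [h1|h1]; [right; auto|].
  destruct (Rle_dec (2*t-1) (1/2)) as [h2|h2]; left;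
    [left | right]; repeat split; auto; unfold I01 in *; lra.
Qed.

Lemma inP_is_loop (X : TopSpace) K Id a f : inP X K Id a f -> is_path X f a a.
Proof.
  induction 1 as [f [[cf _] [f0 f1]] | | | | f g _ _ Hfg].
  - split; auto.
  - apply is_path_const.
  - apply is_path_rev; auto.
  - eapply is_path_concat; eauto.
  - apply loop_homotopicE in Hfg. eapply path_homotopic_path_r; eauto.
Qed.

Lemma inP_conj_path (X : TopSpace) K Id u a b f : infinite_card K -> is_arc X u a b ->
  inP X K Id a f -> inP X K Id b (conj_path X u f).
Proof.
  intros inf au. pose proof (proj1 au) as pu.
  induction 1 as [f Hf | | f Hf IH | f g Hf IHf Hg IHg | f g Hf IH Hfg].
  - apply inP_gen, (alpha_I_loop_conj_path X K Id u a); auto.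
  - eapply inP_hom; [apply inP_one|].
    apply loop_homotopicE, path_homotopic_sym, conj_path_const; auto.
  - eapply inP_hom; [apply inP_inv, IH|].
    apply loop_homotopicE, path_homotopic_sym, conj_path_rev with a; auto.
    eapply inP_is_loop; eauto.
  - eapply inP_hom; [apply (inP_mul X K Id b _ _ IHf IHg)|].
    apply loop_homotopicE, path_homotopic_sym, conj_path_concat with a; auto;
      eapply inP_is_loop; eauto.
  - eapply inP_hom; [apply IH|].
    apply loop_homotopicE, conj_path_homotopic with a; [exact pu|].
    apply loop_homotopicE, Hfg.
Qed.

Lemma P_isomorphic_refl (X : TopSpace) K Id a : P_isomorphic X K Id a a.
Proof.
  exists (fun f => f). split; [|split; [|split; [|split]]]; auto.
  - intros g Hg. exists g. split; auto.
    apply loop_homotopicE, path_homotopic_refl. eapply inP_is_loop; eauto.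
  - intros f g Hf Hg. apply loop_homotopicE, path_homotopic_refl.
    eapply is_path_concat; eapply inP_is_loop; eauto.
Qed.

Lemma P_isomorphic_arc (X : TopSpace) K Id u a b :
  infinite_card K -> is_arc X u a b -> P_isomorphic X K Id a b.
Proof.
  intros inf au. pose proof (proj1 au) as pu.
  pose proof (is_arc_rev X u a b au) as au'. pose proof (proj1 au') as pu'.
  exists (conj_path X u). split; [|split; [|split; [|split]]].
  - intros f Hf. apply inP_conj_path with a; auto.
  - intros f g Hf Hfg. apply loop_homotopicE, conj_path_homotopic with a; [exact pu|].
    apply loop_homotopicE, Hfg.
  - intros f g Hf Hg Hfg. apply loop_homotopicE. apply loop_homotopicE in Hfg.
    apply path_homotopic_trans with (conj_path X (rev_path X u) (conj_path X u f)).
    { apply path_homotopic_sym, conj_path_revK with b; auto. eapply inP_is_loop; eauto. }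
    apply path_homotopic_trans with (conj_path X (rev_path X u) (conj_path X u g)).
    { apply conj_path_homotopic with b; auto. }
    apply conj_path_revK with b; auto. eapply inP_is_loop; eauto.
  - intros g Hg. exists (conj_path X (rev_path X u) g). split.
    + apply inP_conj_path with b; auto.
    + apply loop_homotopicE.
      apply path_homotopic_ext with
        (conj_path X (rev_path X (rev_path X u)) (conj_path X (rev_path X u) g)) g.
      * apply conj_path_revK with a; auto. eapply inP_is_loop; eauto.
      * intros t _. unfold conj_path, concat. repeat rewrite rev_pathK. reflexivity.
      * reflexivity.
  - intros f g Hf Hg. apply loop_homotopicE, conj_path_concat with a; auto;
      eapply inP_is_loop; eauto.
Qed.

Theorem theorem3p5 (X : TopSpace) (Id : (X -> Prop) -> Prop) (K : Type) :
  hausdorff X -> locally_compact X -> arc_connected X ->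
  (exists p q : X, p <> q) ->
  ideal X Id -> infinite_card K ->
  forall a b : X, P_isomorphic X K Id a b.
Proof.
  intros _ _ arcX _ _ inf a b.
  destruct (classic (a = b)) as [<-|ab]; [apply P_isomorphic_refl|].
  destruct (arcX a b ab) as [u [cu [ui [u0 u1]]]].
  apply (P_isomorphic_arc X K Id u); auto.
  split; [split|]; auto.
Qed.
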